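(* Let $t$ be a positive integer and let $M_1,M_2$ be matroids on a finite set $E$ such that $M_2$ is a quotient of $M_1$, and let $\rho=r_{M_1}+r_{M_2}$. Then $r(M_1)-r(M_2)\le t$ if and only if the polymatroid $\rho$ does not have the (rank function of the) uniform matroid $U_{t+1,t+1}$ as a minor.
   Context: A polymatroid on $E$ is a function $\rho:2^E\to\mathbb{Z}$ that is normalized, non-decreasing and submodular; matroid rank functions are polymatroids. For matroids $Q,L$ on $E$, $Q$ is a quotient of $L$ if there is a matroid $M$ and $A\subseteq E(M)$ with $L=M\backslash A$ and $Q=M/A$. Polymatroid minors: $\rho_{\backslash A}(X)=\rho(X)$, $\rho_{/A}(X)=\rho(X\cup A)-\rho(A)$ for $X\subseteq E-A$; minors are $(\rho_{\backslash A})_{/B}$ for disjoint $A,B\subseteq E$ (up to isomorphism). $U_{t+1,t+1}$ is the free matroid on $t+1$ elements, whose rank function is $X\mapsto|X|$. *)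

From mathcomp Require Import all_boot all_order all_algebra.
Set Implicit Arguments. Unset Strict Implicit. Unset Printing Implicit Defensive.
Import GRing.Theory Num.Theory.
Local Open Scope ring_scope.

Definition is_matroid_rank (E : finType) (r : {set E} -> nat) : Prop :=
  [/\ (forall X : {set E}, (r X <= #|X|)%N),
      (forall X Y : {set E}, X \subset Y -> (r X <= r Y)%N) &
      (forall X Y : {set E}, (r (X :|: Y) + r (X :&: Y) <= r X + r Y)%N)].

Definition is_polymatroid (E : finType) (rho : {set E} -> int) : Prop :=
  [/\ rho set0 = 0,
      (forall X Y : {set E}, X \subset Y -> rho X <= rho Y) &
      (forall X Y : {set E}, rho (X :|: Y) + rho (X :&: Y) <= rho X + rho Y)].

(* Q is a quotient of L (both matroids on E): there is a matroid M on a
   ground set E(M) = E ⊔ A (modelled as the sum type E + T, A = inr-part)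
   with L = M \ A and Q = M / A. *)
Definition is_quotient (E : finType) (rQ rL : {set E} -> nat) : Prop :=
  exists (T : finType) (rM : {set (E + T)%type} -> nat),
    [/\ is_matroid_rank rM,
        (forall X : {set E}, rL X = rM (inl @: X)) &
        (forall X : {set E},
            rQ X = (rM (inl @: X :|: inr @: [set: T]) - rM (inr @: [set: T]))%N)].

(* rho has a minor (rho \ A) / B (A, B disjoint subsets of E) that is
   isomorphic to the polymatroid sigma on 'I_n, via a bijection
   f : 'I_n -> E - (A ∪ B).  Deletion does not change values, and
   (rho\A)/B (X) = rho (X ∪ B) - rho B. *)
Definition has_minor_iso (E : finType) (rho : {set E} -> int) (n : nat)
    (sigma : {set 'I_n} -> int) : Prop :=
  exists (A B : {set E}) (f : 'I_n -> E),
    [/\ [disjoint A & B],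
        injective f,
        (forall i, f i \notin A :|: B),
        (forall e, e \notin A :|: B -> exists i, f i = e) &
        (forall X : {set 'I_n}, rho (f @: X :|: B) - rho B = sigma X)].

Definition free_rank (n : nat) : {set 'I_n} -> int := fun X => (#|X|%:Z).

From mathcomp Require Import all_boot all_order all_algebra.
From mathcomp Require Import zify.
Import GRing.Theory Num.Theory.
Set Implicit Arguments. Unset Strict Implicit.

(* Write rho = r1 + r2 and let M2 be a quotient of M1, so that the rank
   increments of M2 never exceed those of M1.  If (rho \ A) / B is free on t+1
   elements, then each of these elements has rho-increment 1 over B, which
   forces its M2-increment to be 0; so the t+1 elements lie in the M2-closure
   of B and raise the M1-rank by t+1 while leaving the M2-rank unchanged,
   whence r(M1) - r(M2) > t.  Conversely, extend a basis B of M2 to a basis of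
   M1; if r(M1) - r(M2) > t, contracting B and deleting all but t+1 of the new
   basis elements leaves a free polymatroid on t+1 elements. *)

Section MatroidRank.
Variables (E : finType) (r : {set E} -> nat).
Hypothesis rank_r : is_matroid_rank r.

Definition independent (S : {set E}) : Prop := r S = #|S|.

Lemma rank_set0 : r set0 = 0.
Proof. by case: rank_r => bounded _ _; apply/eqP; rewrite -leqn0 -(cards0 E) bounded. Qed.

Lemma rank_setU_spanned (S Y : {set E}) :
  (forall e, e \in Y -> r (e |: S) <= r S) -> r (Y :|: S) <= r S.
Proof.
case: rank_r => _ mono submod.
have [n] := ubnP #|Y|; elim: n Y => // n IH Y ltYn spanned.
have [->|[e eY]] := set_0Vmem Y; first by rewrite set0U.
rewrite -(setD1K eY) in spanned *; set Y' := Y :\ e in spanned *.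
have IH' : r (Y' :|: S) <= r S.
  apply: IH => [|x xY]; first by rewrite -ltnS (leq_trans _ ltYn) // (cardsD1 e Y) eY.
  by apply: spanned; rewrite in_setU1 xY orbT.
have := submod (Y' :|: S) (e |: S).
have -> : Y' :|: S :|: (e |: S) = e |: Y' :|: S.
  by rewrite setUC -!setUA (setUCA S) setUid.
have := mono S ((Y' :|: S) :&: (e |: S)); rewrite subsetI !subsetUr => /(_ isT).
have := spanned e (setU11 e Y'); lia.
Qed.

Lemma independent_subset (S X : {set E}) :
  independent S -> X \subset S -> independent X.
Proof.
case: rank_r => bounded _ submod; rewrite /independent => indS XS.
have := submod (S :&: X) (S :\: X).
have -> : S :&: X :&: (S :\: X) = set0 by rewrite setDE setIACA setICr setI0.
have := cardsID X S; have := bounded X; have := bounded (S :\: X).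
rewrite setID (setIidPr XS) rank_set0 indS; lia.
Qed.

Lemma independent_extend_basis (B : {set E}) :
  independent B -> exists2 S : {set E}, B \subset S & independent S /\ r setT = r S.
Proof.
case: rank_r => bounded mono _ indB.
pose extends_B (S : {set E}) := (B \subset S) && (r S == #|S|).
have PB : extends_B B by rewrite /extends_B subxx indB eqxx.
case: (@arg_maxnP _ B extends_B (fun S : {set E} => #|S|) PB) => S /andP[BS /eqP indS] maxS.
exists S => //; split => //.
apply/eqP; rewrite eqn_leq (mono _ _ (subsetT S)) andbT -{1}(setTU S).
apply: rank_setU_spanned => e _.
have [eS|eS] := boolP (e \in S); first by rewrite (setUidPr _) // sub1set.
have card_eS : #|e |: S| = #|S|.+1 by rewrite cardsU1 eS.
rewrite -ltnS indS -card_eS ltn_neqAle bounded andbT; apply/eqP => ind_eS.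
have := maxS (e |: S); rewrite /extends_B (subset_trans BS (subsetUr _ _)) ind_eS.
by rewrite eqxx card_eS /= ltnn => /(_ isT).
Qed.

End MatroidRank.

Lemma exists_inj_from_ord (T : finType) (D : {set T}) (n : nat) :
  n <= #|D| -> exists2 f : 'I_n -> T, injective f & forall i, f i \in D.
Proof.
move=> le_nD; exists (fun i => enum_val (widen_ord le_nD i)) => [i j|i].
  by move=> /enum_val_inj /(congr1 val) /=; apply: val_inj.
exact: enum_valP.
Qed.

Lemma has_minor_iso_contract (E : finType) (rho : {set E} -> int) (n : nat)
    (sigma : {set 'I_n} -> int) (B : {set E}) (f : 'I_n -> E) :
  injective f -> (forall i, f i \notin B) ->
  (forall X : {set 'I_n}, rho (f @: X :|: B) - rho B = sigma X)%R ->
  has_minor_iso rho sigma.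
Proof.
move=> f_inj fB val_f; exists (~: (B :|: f @: setT)), B, f; split => //.
- by rewrite disjoints_subset setCS subsetUl.
- by move=> i; rewrite !inE imset_f // orbT fB.
- move=> e; rewrite !inE negb_or negbK => /andP[/orP[eB|/imsetP[i _ ->]] eB'].
    by rewrite eB in eB'.
  by exists i.
Qed.

Lemma inl_inr_disjoint (E T : finType) (X : {set E}) (Y : {set T}) :
  inl @: X :&: inr @: Y = set0 :> {set E + T}.
Proof. by apply/setP => x; rewrite !inE; apply/andP => -[/imsetP[? _ ->] /imsetP[]]. Qed.

Section Quotient.
Variables (E : finType) (r1 r2 : {set E} -> nat).
Hypotheses (rank_r1 : is_matroid_rank r1) (rank_r2 : is_matroid_rank r2).
Hypothesis quotient_r2_r1 : is_quotient r2 r1.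

Lemma quotient_increment_le (X Y : {set E}) :
  X \subset Y -> r2 Y + r1 X <= r1 Y + r2 X.
Proof.
case: quotient_r2_r1 => T [rM [[_ mono submod] r1E r2E]] XY; rewrite !r1E !r2E.
set A := inr @: [set: T].
have joinYX : inl @: Y :|: (inl @: X :|: A) = inl @: Y :|: A.
  by rewrite setUA -imsetU (setUidPl XY).
have meetYX : inl @: Y :&: (inl @: X :|: A) = inl @: X.
  rewrite setIUr -imsetI; last by move=> ? ? ? ? [].
  by rewrite inl_inr_disjoint setU0 (setIidPr XY).
have := submod (inl @: Y) (inl @: X :|: A); rewrite joinYX meetYX.
have := mono A (inl @: Y :|: A) (subsetUr _ _).
have := mono A (inl @: X :|: A) (subsetUr _ _); lia.
Qed.

Lemma quotient_rank_le (X : {set E}) : r2 X <= r1 X.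
Proof.
have := quotient_increment_le (sub0set X).
by rewrite rank_set0 // rank_set0 // !addn0.
Qed.

Let rho (X : {set E}) : int := (r1 X + r2 X)%N.

Lemma free_minor_rank_gap (n : nat) :
  has_minor_iso rho (@free_rank n) -> n + r2 setT <= r1 setT.
Proof.
case=> A [B [f [_ f_inj _ _ val_f]]].
case: rank_r1 => _ mono1 _; case: rank_r2 => _ mono2 _.
set C := f @: setT.
have spanned : r2 (C :|: B) <= r2 B.
  apply: rank_setU_spanned => // _ /imsetP[i _ ->].
  have := val_f [set i]; rewrite /rho /free_rank cards1 imset_set1 /=.
  have := quotient_increment_le (subsetUr [set f i] B).
  have := mono1 B (f i |: B) (subsetUr _ _); lia.
have := val_f setT; rewrite /rho /free_rank cardsT card_ord -/C /=.
have := quotient_increment_le (subsetT (C :|: B)).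
have := quotient_rank_le B.
have := mono2 B (C :|: B) (subsetUr _ _); lia.
Qed.

Lemma free_minor_of_rank_gap (n : nat) :
  n + r2 setT <= r1 setT -> has_minor_iso rho (@free_rank n).
Proof.
move=> gap.
have indep0 : independent r2 set0 by rewrite /independent rank_set0 ?cards0.
have [B _ [indB2 basisB2]] := independent_extend_basis rank_r2 indep0.
have indB1 : independent r1 B.
  case: rank_r1 => bounded _ _; move: (bounded B) (quotient_rank_le B) indB2.
  by rewrite /independent; lia.
have [S BS [indS basisS]] := independent_extend_basis rank_r1 indB1.
have [f f_inj fS] : exists2 f : 'I_n -> E, injective f & forall i, f i \in S :\: B.
  apply: exists_inj_from_ord; rewrite cardsD (setIidPr BS).
  by move: gap indB2 indS; rewrite basisB2 basisS /independent; lia.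
apply: (has_minor_iso_contract (B := B) f_inj) => [i|X].
  by have := fS i; rewrite inE => /andP[].
have fX_SB : f @: X \subset S :\: B by apply/subsetP => _ /imsetP[i _ ->].
have fXB : [disjoint f @: X & B].
  by rewrite disjoints_subset (subset_trans fX_SB) // setDE subsetIr.
have fXBS : f @: X :|: B \subset S by rewrite subUset BS (subset_trans fX_SB) ?subsetDl.
have r1_fXB : r1 (f @: X :|: B) = #|X| + #|B|.
  have := independent_subset rank_r1 indS fXBS.
  by rewrite /independent cardsU (disjoint_setI0 fXB) cards0 subn0 card_imset.
have r2_fXB : r2 (f @: X :|: B) = r2 B.
  case: rank_r2 => _ mono2 _; apply/anti_leq.
  by rewrite -{1}basisB2 !mono2 ?subsetT ?subsetUr.
rewrite /rho /free_rank r1_fXB r2_fXB.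
by move: indB1 indB2; rewrite /independent; lia.
Qed.

End Quotient.

Local Open Scope ring_scope.

Theorem theorem5p4 (E : finType) (t : nat) (r1 r2 : {set E} -> nat) :
  (0 < t)%N ->
  is_matroid_rank r1 -> is_matroid_rank r2 ->
  is_quotient r2 r1 ->
  ((r1 [set: E])%:Z - (r2 [set: E])%:Z <= t%:Z <->
   ~ @has_minor_iso E (fun X : {set E} => ((r1 X + r2 X)%N)%:Z) t.+1 (@free_rank t.+1)).
Proof.
move=> _ rank_r1 rank_r2 quotient_r2_r1.
split=> [gap_le_t /(free_minor_rank_gap rank_r1 rank_r2 quotient_r2_r1)|no_minor].
  lia.
rewrite lerBlDr -PoszD lez_nat leqNgt; apply/negP => gap.
exact/no_minor/(free_minor_of_rank_gap rank_r1 rank_r2 quotient_r2_r1).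
Qed.
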